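(* For a morphism of presheaves $f:X\to Y$ on $\mathscr{V}_f$, the following are equivalent: (1) $f$ is a monomorphism; (2) for each $n\in\mathbb{N}$, $f$ restricts to an injective map $X_{\mathrm{reg}}(n)\hookrightarrow Y_{\mathrm{reg}}(n)$ (in particular $f(X_{\mathrm{reg}}(n))\subset Y_{\mathrm{reg}}(n)$).
   Context: $p$ prime, $\mathbb{F}=\mathbb{F}_p$, $\mathscr{V}_f$ finite-dimensional $\mathbb{F}$-vector spaces; presheaves are contravariant functors $\mathscr{V}_f\to$ Sets. For a presheaf $X$ and $n\in\mathbb{N}$, $X(\mathbb{F}^n)$ is a right $\mathrm{End}(\mathbb{F}^n)$-set; the rank filtration $X_{\le 0}\subset X_{\le1}\subset\cdots\subset X$ has $X_{\le n}$ the image of the evaluation map $X(\mathbb{F}^n)\times_{\mathrm{End}(\mathbb{F}^n)}\mathrm{Hom}(-,\mathbb{F}^n)\to X$. The set of regular elements is $X_{\mathrm{reg}}(n)=X(\mathbb{F}^n)\setminus X_{\le n-1}(\mathbb{F}^n)$. *)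

From HB Require Import structures.
From mathcomp Require Import all_boot all_algebra.
Set Implicit Arguments. Unset Strict Implicit. Unset Printing Implicit Defensive.
Import GRing.Theory.
Local Open Scope ring_scope.

(* The category V_f of finite-dimensional F_p-vector spaces is replaced by its
   skeleton: objects F^n (n : nat), morphisms F^m -> F^n are matrices
   'M['F_p]_(m, n) acting on row vectors (v |-> v *m A); composition of
   A : F^m -> F^n after B : F^k -> F^m is B *m A. *)

(* A presheaf (contravariant functor to Sets): act x A = X(A)(x). *)
Record presheaf (p : nat) := Presheaf {
  pobj :> nat -> Type;
  pact : forall m n, pobj n -> 'M['F_p]_(m, n) -> pobj m;
  pact1 : forall n (x : pobj n), pact x 1%:M = x;
  pactM : forall k m n (x : pobj n) (B : 'M['F_p]_(k, m)) (A : 'M['F_p]_(m, n)),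
      pact x (B *m A) = pact (pact x A) B
}.

Record psh_hom (p : nat) (X Y : presheaf p) := PshHom {
  phom :> forall n, X n -> Y n;
  phom_nat : forall m n (x : X n) (A : 'M['F_p]_(m, n)),
      phom (pact x A) = pact (phom x) A
}.

Definition psh_comp (p : nat) (X Y Z : presheaf p)
  (f : psh_hom Y Z) (g : psh_hom X Y) : forall n, X n -> Z n :=
  fun n x => f n (g n x).

Definition psh_mono (p : nat) (X Y : presheaf p) (f : psh_hom X Y) : Prop :=
  forall (Z : presheaf p) (g h : psh_hom Z X),
    (forall n (z : Z n), f n (g n z) = f n (h n z)) ->
    forall n (z : Z n), g n z = h n z.

Definition rank_le (p : nat) (X : presheaf p) (r k : nat) (y : X k) : Prop :=
  exists (x : X r) (A : 'M['F_p]_(k, r)), y = pact x A.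

(* Regular elements X_reg(n) = X(F^n) \ X_{<= n-1}(F^n), with X_{<= -1} = empty. *)
Definition regular (p : nat) (X : presheaf p) (n : nat) (x : X n) : Prop :=
  match n return X n -> Prop with
  | 0 => fun _ => True
  | n'.+1 => fun x => ~ rank_le n' x
  end x.

From mathcomp Require Import all_boot all_algebra.
From Stdlib Require Import Classical.
Set Implicit Arguments. Unset Strict Implicit. Unset Printing Implicit Defensive.
Import GRing.Theory.
Local Open Scope ring_scope.

(* By Yoneda, f is a monomorphism iff every component f_n is injective.
   An injective f_n reflects the rank filtration (an element of X_{<=r}(F^n)
   is fixed by an idempotent factoring through F^r), hence preserves regular
   elements.  Conversely every x factors as x = z A with z regular and A a
   split surjection, and such a factorisation is unique up to isomorphism
   when z is regular; comparing the factorisations of x and x' through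
   f(x) = f(x') reduces injectivity of f_n to injectivity on regular
   elements. *)

Section RankFiltration.
Variables (p : nat) (X : presheaf p).

Lemma rank_le_pact s m n (x : X n) (A : 'M['F_p]_(m, n)) :
  rank_le s x -> rank_le s (pact x A).
Proof. by case=> [w [B ->]]; exists w, (A *m B); rewrite pactM. Qed.

Lemma rank_le_mxrank m n (z : X n) (A : 'M['F_p]_(m, n)) :
  rank_le (\rank A) (pact z A).
Proof.
by exists (pact z (row_base A)), (col_base A); rewrite -pactM mulmx_base.
Qed.

Lemma rank_le_mono s r n (x : X n) : (s <= r)%N -> rank_le s x -> rank_le r x.
Proof.
move=> le_sr [w [B ->]].
exists (pact w (pid_mx s : 'M_(r, s))), (B *m (pid_mx s : 'M_(s, r))).
by rewrite -pactM -mulmxA mul_pid_mx minnn (minn_idPr le_sr) pid_mx_1 mulmx1.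
Qed.

Lemma regularP n (x : X n) : regular x <-> forall s, (s < n)%N -> ~ rank_le s x.
Proof.
case: n x => [|n] x /=; first by split=> // _ [].
split=> [x_reg s le_sn | x_reg]; last exact: x_reg.
by move/(rank_le_mono (le_sn : (s <= n)%N)).
Qed.

Lemma regular_fix_unitmx n (x : X n) (M : 'M['F_p]_n) :
  regular x -> pact x M = x -> M \in unitmx.
Proof.
rewrite -row_free_unit -row_leq_rank leqNgt => /regularP x_reg xM.
apply/negP => lt_rank.
by apply: (x_reg _ lt_rank); rewrite -xM; apply: rank_le_mxrank.
Qed.

Lemma regular_pact_iso r r' (z : X r') (G : 'M['F_p]_(r, r')) G' :
  G *m G' = 1%:M -> G' *m G = 1%:M -> regular z -> regular (pact z G).
Proof.
move=> GG' G'G /regularP z_reg; apply/regularP => s lt_sr zG_s.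
have le_rr' : (r <= r')%N.
  rewrite (leq_trans _ (rank_leq_col G)) // row_leq_rank.
  by apply/row_freeP; exists G'.
apply: (z_reg s (leq_trans lt_sr le_rr')).
by rewrite -[z]pact1 -G'G pactM; apply: rank_le_pact.
Qed.

Lemma regular_split_decomposition n (x : X n) :
  exists r (z : X r) (A : 'M['F_p]_(n, r)) (S : 'M['F_p]_(r, n)),
    [/\ regular z, S *m A = 1%:M & x = pact z A].
Proof.
suff: forall r (z : X r) (A : 'M['F_p]_(n, r)), x = pact z A ->
    exists r (z : X r) (A : 'M['F_p]_(n, r)) (S : 'M['F_p]_(r, n)),
      [/\ regular z, S *m A = 1%:M & x = pact z A].
  by move/(_ n x 1%:M); apply; rewrite pact1.
elim/ltn_ind=> r IH z A xE.
have [[s [lt_sr [w [B xB]]]] | min_r] :=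
  classic (exists s, (s < r)%N /\ rank_le s x).
  exact: IH lt_sr w B xB.
have z_reg : regular z.
  apply/regularP => s lt_sr /(rank_le_pact A) zA_s.
  by apply: min_r; exists s; rewrite xE.
have /row_fullP [S SA] : row_full A.
  rewrite -col_leq_rank leqNgt; apply/negP => lt_rank.
  apply: min_r; exists (\rank A); rewrite xE.
  by split; last exact: rank_le_mxrank.
by exists r, z, A, S.
Qed.

End RankFiltration.

Lemma pinvmx_compl_unitmx_eq0 (F : fieldType) m n (R : 'M[F]_(m, n)) :
  (1%:M - pinvmx R *m R) \in unitmx -> R = 0.
Proof.
set P := pinvmx R *m R => P_compl_unit.
have RP : R *m P = R by rewrite mulmxA mulmxKpV.
suff P0 : P = 0 by rewrite -RP P0 mulmx0.
have PP : P *m P = P by rewrite {1}/P -mulmxA RP.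
have : (1%:M - P) *m P = 0 by rewrite mulmxBl mul1mx PP subrr.
by move/(congr1 (mulmx (invmx (1%:M - P)))); rewrite mulKmx // mulmx0.
Qed.

Section SplitFactorisation.
Variables (p : nat) (Y : presheaf p).

(* The defect of [A2] from factoring through [A1] is killed by an endomorphism
   [E] fixing [A1]; since [y2] is regular, [S2 E A2] is invertible, and this
   forces the defect to vanish. *)
Lemma split_pact_factor n r1 r2 (y1 : Y r1) (y2 : Y r2)
    (A1 : 'M['F_p]_(n, r1)) (A2 : 'M['F_p]_(n, r2)) S1 S2 :
  regular y2 -> S1 *m A1 = 1%:M -> S2 *m A2 = 1%:M ->
  pact y1 A1 = pact y2 A2 -> A1 *m (S1 *m A2) = A2.
Proof.
move=> y2_reg S1A1 S2A2 y12.
set N := 1%:M - A1 *m S1.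
set R := N *m A2.
set E := 1%:M - A2 *m pinvmx R *m N.
have NA1 : N *m A1 = 0 by rewrite mulmxBl mul1mx -mulmxA S1A1 mulmx1 subrr.
have EA1 : E *m A1 = A1 by rewrite mulmxBl mul1mx -!mulmxA NA1 !mulmx0 subr0.
have y2_fix : pact y2 (S2 *m E *m A2) = y2.
  by rewrite pactM -y12 -!pactM -mulmxA EA1 pactM y12 -pactM S2A2 pact1.
have SEA : S2 *m E *m A2 = 1%:M - pinvmx R *m R.
  by rewrite mulmxBr mulmx1 mulmxBl S2A2 !mulmxA S2A2 mul1mx -mulmxA.
have R0 : R = 0.
  apply: pinvmx_compl_unitmx_eq0; rewrite -SEA.
  exact: regular_fix_unitmx y2_fix.
by move: R0; rewrite /R mulmxBl mul1mx => /eqP; rewrite subr_eq0 mulmxA => /eqP.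
Qed.

End SplitFactorisation.

Section Monomorphisms.
Variable p : nat.

Definition representable n : presheaf p :=
  @Presheaf p (fun m => 'M['F_p]_(m, n)) (fun m k M A => A *m M)
    (fun _ M => mul1mx M) (fun _ _ _ M B A => esym (mulmxA B A M)).

Definition yoneda (X : presheaf p) n (x : X n) : psh_hom (representable n) X :=
  @PshHom p (representable n) X (fun m (M : 'M['F_p]_(m, n)) => pact x M)
    (fun _ _ M A => pactM x A M).

Lemma psh_monoP (X Y : presheaf p) (f : psh_hom X Y) :
  psh_mono f <-> forall n, injective (f n).
Proof.
split=> [f_mono n x x' fxx' | f_inj Z g h fgh n z]; last exact/f_inj/fgh.
rewrite -[x]pact1 -[x']pact1.
by apply: (f_mono _ (yoneda x) (yoneda x')) => m M /=; rewrite !phom_nat fxx'.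
Qed.

Variables (X Y : presheaf p) (f : psh_hom X Y).

(* If [f x = pact y A], then [x] and [pact x (A *m pinvmx A)] have the same
   image because [A *m pinvmx A *m A = A]. *)
Lemma rank_le_inj r n (x : X n) :
  injective (f n) -> rank_le r (f n x) -> rank_le r x.
Proof.
move=> f_inj [y [A fxE]]; exists (pact x (pinvmx A)), A.
rewrite -pactM; apply: f_inj.
by rewrite phom_nat fxE -pactM mulmxKpV.
Qed.

Lemma regular_inj n (x : X n) :
  injective (f n) -> regular x -> regular (f n x).
Proof.
move=> f_inj /regularP x_reg; apply/regularP => s lt_sn /(rank_le_inj f_inj).
exact: x_reg.
Qed.

Lemma inj_from_regular
    (f_reg : forall n (x : X n), regular x -> regular (f n x))
    (f_inj_reg : forall n (x x' : X n), regular x -> regular x' ->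
       f n x = f n x' -> x = x') n :
  injective (f n).
Proof.
move=> x x'.
have [r [z [A [S [z_reg SA ->]]]]] := regular_split_decomposition x.
have [r' [z' [A' [S' [z'_reg SA' ->]]]]] := regular_split_decomposition x'.
rewrite !phom_nat => fzA.
have AA' := split_pact_factor (f_reg _ _ z'_reg) SA SA' fzA.
have A'A := split_pact_factor (f_reg _ _ z_reg) SA' SA (esym fzA).
set G := S *m A'.
have GG' : G *m (S' *m A) = 1%:M by rewrite -mulmxA A'A.
have G'G : S' *m A *m G = 1%:M by rewrite -mulmxA AA'.
have fzG : f r z = pact (f r' z') G.
  by rewrite pactM -fzA -pactM SA pact1.
have -> : z = pact z' G.
  apply: f_inj_reg => //; first exact: regular_pact_iso GG' G'G z'_reg.
  by rewrite phom_nat.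
by rewrite -pactM AA'.
Qed.

End Monomorphisms.

(* ['F_p] is a field for every [p]. *)
Theorem proposition5p5 (p : nat) (hp : prime p) (X Y : presheaf p)
  (f : psh_hom X Y) :
  psh_mono f <->
  (forall n : nat,
     (forall x : X n, regular x -> regular (f n x)) /\
     (forall x x' : X n, regular x -> regular x' -> f n x = f n x' -> x = x')).
Proof.
rewrite psh_monoP; split=> [f_inj n | f_reg_inj n].
  by split=> [x | x x' _ _]; [apply: regular_inj | apply: f_inj].
by apply: inj_from_regular => m; have [] := f_reg_inj m.
Qed.
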